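(* Let $R$ be a quotient root system with base $S$, $\Phi\subseteq R^+$ an inversion set, and $A,B,C$ connected components of $G_\Phi^{\Phi^c}$ with $A + B = C$. Then $\operatorname{supp} C = \operatorname{supp} A \cup \operatorname{supp} B$.
   Context: A quotient root system (QRS) $R$ is the set of non-zero images of a root system $\Delta$ (with base $\Sigma$) under the orthogonal projection of its ambient Euclidean space onto $(\mathrm{span}\,J)^\perp$ for some $J\subsetneq\Sigma$; its base $S$ consists of the images of $\Sigma\setminus J$, and every root is an integer combination of $S$ with all coefficients $\ge0$ (positive roots, $R^+$) or all $\le0$. The support of a root is the set of elements of $S$ with non-zero coefficient; the support of a set of roots is the union of the supports. $\Phi\subseteq R^+$ is closed if $\alpha,\beta\in\Phi$, $\alpha+\beta\in R$ imply $\alpha+\beta\in\Phi$; co-closed if $\Phi^c:=R^+\setminus\Phi$ is closed; an inversion set if both. $G_\Phi^{\Phi^c}$ is the graph with vertex set $\Phi$ in which $\alpha,\alpha'$ are adjacent iff $\alpha-\alpha'\in\Phi^c\cup(-\Phi^c)$; components are its connected components. Addition of components: for components $A,B$ let $Z=\{\alpha+\beta:\alpha\in A,\beta\in B\}\cap R$. If $Z\ne\emptyset$ lies in a single component $C$, $A+B:=C$. If $Z$ meets more than one component, then (as established in the paper) $A=B$ and $Z$ meets exactly two components, $A$ and some $C\ne A$; then $A+A:=C$. If $Z=\emptyset$, $A+B$ is undefined. *)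

From HB Require Import structures.
From mathcomp Require Import all_boot all_order all_algebra.
From mathcomp Require Import reals.
From Stdlib Require Import ClassicalEpsilon Relations.
Set Implicit Arguments. Unset Strict Implicit. Unset Printing Implicit Defensive.
Import GRing.Theory Num.Theory.
Local Open Scope ring_scope.

Definition dotv {R : realType} {n : nat} (u v : 'rV[R]_n) : R := (u *m v^T) 0 0.

Definition is_root_system {R : realType} {n : nat} (D : seq 'rV[R]_n) : Prop :=
  (0 \notin D) /\
  (forall a b, a \in D -> b \in D ->
     exists k : int, 2 * dotv a b / dotv a a = k%:~R) /\
  (forall a b, a \in D -> b \in D ->
     b - (2 * dotv a b / dotv a a) *: a \in D) /\
  (forall a (c : R), a \in D -> c *: a \in D -> c = 1 \/ c = -1).

Definition is_base {R : realType} {n m : nat} (D : seq 'rV[R]_n)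
    (b : 'I_m -> 'rV[R]_n) : Prop :=
  (forall i, b i \in D) /\
  (forall c : 'I_m -> R, \sum_i c i *: b i = 0 -> forall i, c i = 0) /\
  (forall a, a \in D -> exists c : 'I_m -> int,
       a = \sum_i (c i)%:~R *: b i /\
       ((forall i, (0 <= c i)%R) \/ (forall i, (c i <= 0)%R))).

Definition is_oproj {R : realType} {n m : nat} (b : 'I_m -> 'rV[R]_n)
    (J : {set 'I_m}) (v w : 'rV[R]_n) : Prop :=
  (forall j, j \in J -> dotv w (b j) = 0) /\
  exists c : 'I_m -> R, v - w = \sum_(j in J) c j *: b j.

(* The orthogonal projection as a function (it exists and is unique). *)
Definition oproj {R : realType} {n m : nat} (b : 'I_m -> 'rV[R]_n)
    (J : {set 'I_m}) (v : 'rV[R]_n) : 'rV[R]_n :=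
  epsilon (inhabits 0) (is_oproj b J v).

Definition qroot {R : realType} {n m : nat} (D : seq 'rV[R]_n)
    (b : 'I_m -> 'rV[R]_n) (J : {set 'I_m}) (w : 'rV[R]_n) : Prop :=
  w != 0 /\ exists a, a \in D /\ w = oproj b J a.

(* Base S of the QRS: the images of Sigma \ J, indexed by i \notin J. *)
Definition sbase {R : realType} {n m : nat} (b : 'I_m -> 'rV[R]_n)
    (J : {set 'I_m}) (i : 'I_m) : 'rV[R]_n := oproj b J (b i).

Definition is_coeffs {R : realType} {n m : nat} (b : 'I_m -> 'rV[R]_n)
    (J : {set 'I_m}) (w : 'rV[R]_n) (c : 'I_m -> int) : Prop :=
  w = \sum_(i | i \notin J) (c i)%:~R *: sbase b J i.

Definition qpos {R : realType} {n m : nat} (D : seq 'rV[R]_n)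
    (b : 'I_m -> 'rV[R]_n) (J : {set 'I_m}) (w : 'rV[R]_n) : Prop :=
  qroot D b J w /\
  exists c, is_coeffs b J w c /\ forall i, i \notin J -> (0 <= c i)%R.

Definition supp_root {R : realType} {n m : nat} (b : 'I_m -> 'rV[R]_n)
    (J : {set 'I_m}) (w : 'rV[R]_n) (i : 'I_m) : Prop :=
  i \notin J /\ exists c, is_coeffs b J w c /\ c i != 0.

Definition supp_set {R : realType} {n m : nat} (b : 'I_m -> 'rV[R]_n)
    (J : {set 'I_m}) (A : 'rV[R]_n -> Prop) (i : 'I_m) : Prop :=
  exists a, A a /\ supp_root b J a i.

(* Generic notions, relative to the root set Rs and positive roots Rp. *)
Definition closed_in {V : zmodType} (Rs : V -> Prop) (P : V -> Prop) : Prop :=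
  forall a c, P a -> P c -> Rs (a + c) -> P (a + c).

Definition compl_in {V : zmodType} (Rp : V -> Prop) (Phi : V -> Prop) (x : V) : Prop :=
  Rp x /\ ~ Phi x.

Definition inversion_set {V : zmodType} (Rs Rp : V -> Prop) (Phi : V -> Prop) : Prop :=
  (forall x, Phi x -> Rp x) /\ closed_in Rs Phi /\ closed_in Rs (compl_in Rp Phi).

Definition gadj {V : zmodType} (Rp : V -> Prop) (Phi : V -> Prop) (x y : V) : Prop :=
  Phi x /\ Phi y /\ (compl_in Rp Phi (x - y) \/ compl_in Rp Phi (y - x)).

Definition gconn {V : zmodType} (Rp : V -> Prop) (Phi : V -> Prop) : V -> V -> Prop :=
  clos_refl_trans V (gadj Rp Phi).

Definition is_component {V : zmodType} (Rp : V -> Prop) (Phi : V -> Prop)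
    (A : V -> Prop) : Prop :=
  exists a, Phi a /\ forall x, A x <-> gconn Rp Phi a x.

Definition same_set {V : Type} (A B : V -> Prop) : Prop := forall x, A x <-> B x.

Definition sumset {V : zmodType} (Rs : V -> Prop) (A B : V -> Prop) (z : V) : Prop :=
  Rs z /\ exists a c, A a /\ B c /\ z = a + c.

Definition comp_add {V : zmodType} (Rs Rp : V -> Prop) (Phi : V -> Prop)
    (A B C : V -> Prop) : Prop :=
  is_component Rp Phi C /\
  (exists z, sumset Rs A B z) /\
  ( (forall z, sumset Rs A B z -> C z)
  \/ ( (exists z z', sumset Rs A B z /\ sumset Rs A B z' /\ ~ gconn Rp Phi z z')
       /\ same_set A B /\ ~ same_set C A /\ (exists z, sumset Rs A B z /\ C z))).

(* If x, y are roots of the quotient with (x, y) > 0, then x - y is a root or 0, as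
   in a root system: lift x to a root a and pick, in the fibre of the projection over y,
   a root d with (a, d) > 0.  This gives two exchange rules for sums of three roots.
   If C is neither A nor B, walking along the edges of C with these rules shows that
   every element of C is a sum a + b with a in A and b in B; walking along B shows that
   every b in B lies in C or has a partner a in A with a + b in C.  Positive roots have
   nonnegative coefficients, so supp (a + b) = supp a U supp b. *)

From HB Require Import structures.
From mathcomp Require Import all_boot all_order all_algebra.
From mathcomp Require Import reals.
From Stdlib Require Import ClassicalEpsilon Relations.
From mathcomp Require Import ring lra zify.
Set Implicit Arguments. Unset Strict Implicit. Unset Printing Implicit Defensive.
Import Order.TTheory GRing.Theory Num.Theory.
Local Open Scope ring_scope.

Section InnerProduct.
Variables (R : realType) (n : nat).
Implicit Types (u v w : 'rV[R]_n) (a : R).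

Lemma dotvC u v : dotv u v = dotv v u.
Proof. by rewrite /dotv -[u *m v^T]trmxK trmx_mul trmxK mxE. Qed.

Lemma dotvDl u w v : dotv (u + w) v = dotv u v + dotv w v.
Proof. by rewrite /dotv mulmxDl mxE. Qed.

Lemma dotvZl a u v : dotv (a *: u) v = a * dotv u v.
Proof. by rewrite /dotv -scalemxAl mxE. Qed.

Lemma dotvNl u v : dotv (- u) v = - dotv u v.
Proof. by rewrite -scaleN1r dotvZl mulN1r. Qed.

Lemma dotvBl u w v : dotv (u - w) v = dotv u v - dotv w v.
Proof. by rewrite dotvDl dotvNl. Qed.

Lemma dotvDr u w v : dotv v (u + w) = dotv v u + dotv v w.
Proof. by rewrite !(dotvC v) dotvDl. Qed.

Lemma dotvZr a u v : dotv v (a *: u) = a * dotv v u.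
Proof. by rewrite !(dotvC v) dotvZl. Qed.

Lemma dotvNr u v : dotv v (- u) = - dotv v u.
Proof. by rewrite !(dotvC v) dotvNl. Qed.

Lemma dotvBr u w v : dotv v (u - w) = dotv v u - dotv v w.
Proof. by rewrite !(dotvC v) dotvBl. Qed.

Lemma dotv_suml (I : Type) (r : seq I) (P : pred I) (F : I -> 'rV[R]_n) v :
  dotv (\sum_(i <- r | P i) F i) v = \sum_(i <- r | P i) dotv (F i) v.
Proof. by rewrite /dotv mulmx_suml summxE. Qed.

Lemma dotv_sumr (I : Type) (r : seq I) (P : pred I) (F : I -> 'rV[R]_n) v :
  dotv v (\sum_(i <- r | P i) F i) = \sum_(i <- r | P i) dotv v (F i).
Proof. by rewrite dotvC dotv_suml; apply: eq_bigr => i _; rewrite dotvC. Qed.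

Lemma dotv_ge0 u : 0 <= dotv u u.
Proof. by rewrite /dotv mxE sumr_ge0 // => k _; rewrite mxE -expr2 sqr_ge0. Qed.

Lemma dotv_eq0 u : (dotv u u == 0) = (u == 0).
Proof.
apply/idP/eqP => [|->]; last by rewrite /dotv mul0mx mxE.
rewrite /dotv mxE psumr_eq0 => [/allP u0|k _]; last by rewrite mxE -expr2 sqr_ge0.
apply/rowP => k; have /implyP/(_ isT) := u0 k (mem_index_enum k).
by rewrite !mxE mulf_eq0 orbb => /eqP.
Qed.

Lemma dotv_gt0 u : (0 < dotv u u) = (u != 0).
Proof. by rewrite lt_def dotv_ge0 dotv_eq0 andbT. Qed.

Definition reflection (c v : 'rV[R]_n) : 'rV[R]_n :=
  v - (2 * dotv v c / dotv c c) *: c.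

Lemma dotv_reflection c v : c != 0 -> dotv (reflection c v) c = - dotv v c.
Proof.
rewrite -dotv_gt0 => c_gt0; rewrite dotvBl dotvZl.
by field; rewrite gt_eqF.
Qed.

Lemma reflectionK c : c != 0 -> involutive (reflection c).
Proof.
rewrite -dotv_gt0 => c_gt0 v; rewrite {1}/reflection dotv_reflection -?dotv_gt0 //.
rewrite /reflection -addrA -!scaleNr -scalerDl.
have -> : - (2 * dotv v c / dotv c c) + - (2 * - dotv v c / dotv c c) = 0.
  by field; rewrite gt_eqF.
by rewrite scale0r addr0.
Qed.

Lemma colinear_of_dotv_sqr_ge u v : u != 0 ->
  dotv u u * dotv v v <= dotv u v ^+ 2 -> v = (dotv u v / dotv u u) *: u.
Proof.
rewrite -dotv_gt0 => u_gt0 le_uv; apply/eqP; rewrite -subr_eq0 -dotv_eq0.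
rewrite eq_le dotv_ge0 andbT !(dotvBl, dotvBr, dotvZl, dotvZr) (dotvC v u).
rewrite -subr_le0 in le_uv; set e := (X in X <= 0).
have -> : e = (dotv u u * dotv v v - dotv u v ^+ 2) / dotv u u.
  by rewrite /e; field; rewrite gt_eqF.
by rewrite pmulr_lle0 ?invr_gt0.
Qed.

End InnerProduct.

Section Projection.
Variables (R : realType) (n m : nat) (b : 'I_m -> 'rV[R]_n) (J : {set 'I_m}).
Implicit Types (u v w x : 'rV[R]_n).

Definition span_mx : 'M[R]_(m, n) :=
  \matrix_(i, k) (if i \in J then b i 0 k else 0).

Lemma row_span_mx i : row i span_mx = if i \in J then b i else 0.
Proof. by apply/rowP => k; rewrite !mxE; case: (i \in J); rewrite ?mxE. Qed.

Lemma b_sub_span_mx j : j \in J -> (b j <= span_mx)%MS.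
Proof. by move=> jJ; have := row_span_mx j; rewrite jJ => <-; apply: row_sub. Qed.

Lemma span_mxP v : reflect (exists c, v = \sum_(j in J) c j *: b j) (v <= span_mx)%MS.
Proof.
have mul_span (x : 'rV_m) : x *m span_mx = \sum_(j in J) x 0 j *: b j.
  rewrite mulmx_sum_row (bigID (mem J)) /= [X in _ + X]big1 ?addr0.
    by apply: eq_bigr => i iJ; rewrite row_span_mx iJ.
  by move=> i /negbTE iJ; rewrite row_span_mx iJ scaler0.
apply: (iffP submxP) => [[x ->]|[c ->]]; first by exists (fun j => x 0 j).
by exists (\row_j c j); rewrite mul_span; apply: eq_bigr => j _; rewrite mxE.
Qed.

Lemma orth_span_mxP w :
  reflect (forall j, j \in J -> dotv w (b j) = 0) (w *m span_mx^T == 0).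
Proof.
have entry j : (w *m span_mx^T) 0 j = if j \in J then dotv w (b j) else 0.
  rewrite /dotv !mxE; case: ifP => jJ.
    by apply: eq_bigr => k _; rewrite !mxE jJ.
  by rewrite big1 // => k _; rewrite !mxE jJ mulr0.
apply: (iffP eqP) => [w0 j jJ|w0]; first by have := entry j; rewrite w0 jJ mxE.
by apply/rowP => j; rewrite entry mxE; case: ifP => // /w0.
Qed.

Lemma dotv_span_orth x w :
  (x <= span_mx)%MS -> w *m span_mx^T = 0 -> dotv x w = 0.
Proof.
move=> /submxP[c ->] w0.
by rewrite /dotv -mulmxA -[span_mx *m _]trmxK trmx_mul trmxK w0 trmx0 mulmx0 mxE.
Qed.

Lemma span_orth_eq0 x : (x <= span_mx)%MS -> x *m span_mx^T = 0 -> x = 0.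
Proof. by move=> xS x0; apply/eqP; rewrite -dotv_eq0 dotv_span_orth. Qed.

Lemma is_oprojE v w :
  is_oproj b J v w <-> w *m span_mx^T = 0 /\ (v - w <= span_mx)%MS.
Proof.
split=> [[/orth_span_mxP/eqP w0 c]|[/eqP/orth_span_mxP w0 /span_mxP]] //.
by split=> //; apply/span_mxP.
Qed.

(* The decomposition comes from [span_mx + kermx span_mx^T] being full. *)
Lemma oproj_exists v : exists w, is_oproj b J v w.
Proof.
set W := kermx span_mx^T.
have cap0 : (span_mx :&: W)%MS == 0.
  apply/rowV0P => u; rewrite sub_capmx => /andP[uS /sub_kermxP u0].
  exact: span_orth_eq0.
have full : row_full (span_mx + W)%MS.
  rewrite /row_full; apply/eqP.
  have := mxrank_sum_cap span_mx W; move: cap0; rewrite -mxrank_eq0 => /eqP ->.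
  rewrite mxrank_ker mxrank_tr addn0 => ->.
  by rewrite subnKC // rank_leq_col.
have /sub_addsmxP[[x y] /= ->] : (v <= span_mx + W)%MS by apply: submx_full.
exists (y *m W); apply/is_oprojE; split; first by rewrite -mulmxA mulmx_ker mulmx0.
by rewrite addrK submxMl.
Qed.

Lemma oprojP v :
  oproj b J v *m span_mx^T = 0 /\ (v - oproj b J v <= span_mx)%MS.
Proof. by apply/is_oprojE; apply: epsilon_spec; apply: oproj_exists. Qed.

Lemma oproj_unique v w :
  w *m span_mx^T = 0 -> (v - w <= span_mx)%MS -> oproj b J v = w.
Proof.
move=> w0 vw; have [p0 vp] := oprojP v; apply/eqP; rewrite -subr_eq0; apply/eqP.
apply: span_orth_eq0; last by rewrite mulmxBl p0 w0 subrr.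
have -> : oproj b J v - w = (v - w) - (v - oproj b J v).
  by rewrite opprB [RHS]addrC addrA subrK.
by rewrite addmx_sub ?eqmx_opp.
Qed.

Lemma oproj_is_linear : linear (oproj b J).
Proof.
move=> a u v; have [pu0 up] := oprojP u; have [pv0 vp] := oprojP v.
apply: oproj_unique; first by rewrite mulmxDl -scalemxAl pu0 pv0 scaler0 addr0.
have -> : a *: u + v - (a *: oproj b J u + oproj b J v)
    = a *: (u - oproj b J u) + (v - oproj b J v).
  by rewrite scalerBr opprD addrACA.
by rewrite addmx_sub ?scalemx_sub.
Qed.

Lemma oproj_span v : (v <= span_mx)%MS -> oproj b J v = 0.
Proof. by move=> vS; apply: oproj_unique; rewrite ?mul0mx ?subr0. Qed.

Lemma oproj_id v : v *m span_mx^T = 0 -> oproj b J v = v.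
Proof. by move=> v0; apply: oproj_unique; rewrite ?subrr ?sub0mx. Qed.

Lemma dotv_oproj u w : w *m span_mx^T = 0 -> dotv u w = dotv (oproj b J u) w.
Proof.
move=> w0; apply/eqP; rewrite -subr_eq0 -dotvBl.
by rewrite dotv_span_orth //; case: (oprojP u).
Qed.

End Projection.

HB.instance Definition _ (R : realType) n m (b : 'I_m -> 'rV[R]_n) J :=
  GRing.isLinear.Build R 'rV[R]_n 'rV[R]_n *:%R (oproj b J) (oproj_is_linear b J).

Lemma oproj_reflection (R : realType) n m (b : 'I_m -> 'rV[R]_n) (J : {set 'I_m}) j v :
  j \in J -> oproj b J (reflection (b j) v) = oproj b J v.
Proof.
by move=> jJ; rewrite linearB linearZ /= (oproj_span (b_sub_span_mx _ jJ)) scaler0 subr0.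
Qed.

Section RootSystem.
Variables (R : realType) (n : nat) (D : seq 'rV[R]_n).
Hypothesis HD : is_root_system D.
Implicit Types (x y : 'rV[R]_n).

Lemma root_neq0 x : x \in D -> x != 0.
Proof. by case: HD => D0 _ xD; apply: contraNneq D0 => <-. Qed.

Lemma root_reflection x y : x \in D -> y \in D -> reflection x y \in D.
Proof. by case: HD => _ [_ [Hr _]] xD yD; rewrite /reflection dotvC; apply: Hr. Qed.

Lemma root_opp x : x \in D -> - x \in D.
Proof.
move=> xD; have := root_reflection xD xD; rewrite /reflection.
have -> : 2 * dotv x x / dotv x x = 2 by field; rewrite dotv_eq0 root_neq0.
by rewrite scaler_nat mulr2n opprD addrA subrr add0r.
Qed.

Lemma cartan_eq1_or_ge2 x y : x \in D -> y \in D -> 0 < dotv x y ->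
  2 * dotv x y / dotv x x = 1 \/ dotv x x <= dotv x y.
Proof.
move=> xD yD xy_gt0; have x_gt0 : 0 < dotv x x by rewrite dotv_gt0 root_neq0.
case: HD => _ [Hint _]; have [k Ek] := Hint x y xD yD.
have k_gt0 : (0 < k)%R by rewrite -(ltr0z R) -Ek divr_gt0 ?mulr_gt0.
have [k1|k_ne1] := eqVneq k 1; first by left; rewrite Ek k1.
right; have : (2 <= k)%R by lia.
rewrite -(ler_int R) -Ek ler_pdivlMr //; lra.
Qed.

(* Unless one of the Cartan integers is 1, Cauchy-Schwarz is an equality. *)
Lemma root_sub x y : x \in D -> y \in D -> 0 < dotv x y -> x - y \in D \/ x = y.
Proof.
move=> xD yD xy_gt0; have yx_gt0 : 0 < dotv y x by rewrite dotvC.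
have [k1|le_xx] := cartan_eq1_or_ge2 xD yD xy_gt0.
  left; rewrite -opprB root_opp //.
  by have := root_reflection xD yD; rewrite /reflection dotvC k1 scale1r.
have [k2|le_yy] := cartan_eq1_or_ge2 yD xD yx_gt0.
  by left; have := root_reflection yD xD; rewrite /reflection dotvC k2 scale1r.
have x_gt0 : 0 < dotv x x by rewrite dotv_gt0 root_neq0.
have Ey : y = (dotv x y / dotv x x) *: x.
  apply: colinear_of_dotv_sqr_ge; first exact: root_neq0.
  by rewrite [dotv y x]dotvC in le_yy; rewrite expr2 ler_pM ?dotv_ge0.
case: HD => _ [_ [_ Hred]]; have := Hred x (dotv x y / dotv x x) xD.
rewrite -Ey => /(_ yD) [t1|tN1].
  by right; rewrite Ey t1 scale1r.
by move: (divr_gt0 xy_gt0 x_gt0); rewrite tN1 ltr0N1.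
Qed.

End RootSystem.

Section QuotientRootSystem.
Variables (R : realType) (n m : nat) (D : seq 'rV[R]_n) (b : 'I_m -> 'rV[R]_n).
Variable J : {set 'I_m}.
Hypotheses (HD : is_root_system D) (HB : is_base D b).
Implicit Types (x y w : 'rV[R]_n).

Local Notation pi := (oproj b J).

Definition fibre beta := [seq d <- undup D | pi d == beta].

Lemma mem_fibre beta d : (d \in fibre beta) = (d \in D) && (pi d == beta).
Proof. by rewrite mem_filter mem_undup andbC. Qed.

Lemma perm_fibre_reflection beta j :
  j \in J -> perm_eq (map (reflection (b j)) (fibre beta)) (fibre beta).
Proof.
move=> jJ; have bjD : b j \in D by case: HB.
have /reflectionK sK := root_neq0 HD bjD.
have Lrefl d : d \in fibre beta -> reflection (b j) d \in fibre beta.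
  by rewrite !mem_fibre oproj_reflection // => /andP[dD ->]; rewrite root_reflection.
have Luniq : uniq (fibre beta) by rewrite filter_uniq ?undup_uniq.
apply: uniq_perm; rewrite ?(map_inj_uniq (can_inj sK)) //.
move=> d; apply/mapP/idP => [[d' d'L ->]|dL]; first exact: Lrefl.
by exists (reflection (b j) d); rewrite ?sK ?Lrefl.
Qed.

(* The reflections in the [b j], [j \in J], permute each fibre of [pi], so the
   sum of a fibre is orthogonal to [span_mx b J], hence fixed by [pi]. *)
Lemma sum_fibre beta :
  \sum_(d <- fibre beta) d = (size (fibre beta))%:R *: beta.
Proof.
rewrite -[LHS](oproj_id (b := b) (J := J)).
  rewrite raddf_sum /= big_seq (eq_bigr (fun=> beta)) -?big_seq.
    by rewrite big_const_seq count_predT iter_addr_0 scaler_nat.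
  by move=> d; rewrite mem_fibre => /andP[_ /eqP].
apply/eqP/orth_span_mxP => j jJ; have bj0 : b j != 0 by apply: (root_neq0 HD); case: HB.
have := perm_big _ (perm_fibre_reflection beta jJ) : _ = \sum_(d <- fibre beta) d.
move=> /(congr1 (dotv^~ (b j))) /=; rewrite big_map !dotv_suml.
under eq_bigr do rewrite dotv_reflection //.
by rewrite sumrN => /eqP; rewrite eq_sym -subr_eq0 opprK -mulr2n mulrn_eq0 => /eqP.
Qed.

Lemma exists_fibre_dotv_gt0 a d0 : d0 \in D -> 0 < dotv (pi a) (pi d0) ->
  exists2 d, (d \in D) && (pi d == pi d0) & 0 < dotv a d.
Proof.
move=> d0D pos; have d0L : d0 \in fibre (pi d0) by rewrite mem_fibre d0D eqxx.
suff /hasP[d] : has (fun d => 0 < dotv a d) (fibre (pi d0)) by rewrite mem_fibre; exists d.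
apply: contraTT pos; rewrite -!leNgt => /hasPn neg.
have : dotv a (\sum_(d <- fibre (pi d0)) d) <= 0.
  by rewrite dotv_sumr big_seq sumr_le0 // => d /neg; rewrite -leNgt.
have pi_orth : pi d0 *m (span_mx b J)^T = 0 by case: (oprojP b J d0).
rewrite sum_fibre dotvZr (dotv_oproj _ pi_orth) pmulr_rle0 // ltr0n.
by case: (fibre (pi d0)) d0L.
Qed.

Definition qroot0 w := qroot D b J w \/ w = 0.

Lemma qroot_sub x y : qroot D b J x -> qroot D b J y -> 0 < dotv x y -> qroot0 (x - y).
Proof.
move=> [_ [a [aD ->]]] [_ [d0 [d0D ->]]] pos.
have [d /andP[dD /eqP pid] ad] := exists_fibre_dotv_gt0 d0D pos.
have [e|ne] := eqVneq (pi a - pi d0) 0; first by right.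
case: (root_sub HD aD dD ad) => [adD|ad_eq]; last by rewrite ad_eq pid subrr eqxx in ne.
by left; split=> //; exists (a - d); rewrite adD linearB /= pid.
Qed.

Lemma sbase_free (c : 'I_m -> R) :
  \sum_(i | i \notin J) c i *: sbase b J i = 0 -> forall i, i \notin J -> c i = 0.
Proof.
move=> c0; set v := \sum_(i | i \notin J) c i *: b i.
have pv0 : pi v = 0.
  by rewrite /v raddf_sum -[RHS]c0; apply: eq_bigr => i _; apply: linearZ.
have := (oprojP b J v).2; rewrite pv0 subr0 => /span_mxP[e Ev].
pose f i := if i \in J then - e i else c i.
have f0 : \sum_i f i *: b i = 0.
  have fJ : \sum_(i in J) f i *: b i = - v.
    by rewrite Ev -sumrN; apply: eq_bigr => i iJ; rewrite /f iJ scaleNr.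
  have fJc : \sum_(i | i \notin J) f i *: b i = v.
    by apply: eq_bigr => i /negbTE iJ; rewrite /f iJ.
  by rewrite (bigID (mem J)) /= fJ fJc addNr.
by case: HB => _ [Hind _] i iJ; have := Hind f f0 i; rewrite /f (negbTE iJ).
Qed.

Lemma coeffs_unique w c c' :
  is_coeffs b J w c -> is_coeffs b J w c' -> forall i, i \notin J -> c i = c' i.
Proof.
move=> Ec Ec' i iJ; apply/eqP; rewrite -(eqr_int R) -subr_eq0; apply/eqP.
move: i iJ; apply: sbase_free.
by under eq_bigr do rewrite scalerBl; rewrite sumrB -Ec -Ec' subrr.
Qed.

Lemma qroot_coeffs w : qroot D b J w -> exists c, is_coeffs b J w c /\
  ((forall i, (0 <= c i)%R) \/ (forall i, (c i <= 0)%R)).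
Proof.
case: HB => _ [_ Hb] [_ [a [aD ->]]]; have [c [Ea Hc]] := Hb a aD.
exists c; split => //; rewrite /is_coeffs Ea raddf_sum (bigID (mem J)) /= big1 ?add0r.
  by apply: eq_bigr => i _; rewrite linearZ.
by move=> i iJ; rewrite linearZ /= oproj_span ?scaler0 ?b_sub_span_mx.
Qed.

Lemma qroot_opp w : qroot D b J w -> qroot D b J (- w).
Proof.
move=> [w0 [a [aD Ew]]]; split; first by rewrite oppr_eq0.
by exists (- a); rewrite (root_opp HD aD) Ew linearN.
Qed.

Definition pos_comb w :=
  exists c, is_coeffs b J w c /\ forall i, i \notin J -> (0 <= c i)%R.

Lemma qroot_pos_or_neg w : qroot D b J w -> qpos D b J w \/ qpos D b J (- w).
Proof.
move=> Rw; have [c [Ec [c_ge0|c_le0]]] := qroot_coeffs Rw.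
  by left; split => //; exists c.
right; split; first exact: qroot_opp.
exists (fun i => - c i); split => [|i _]; last by rewrite oppr_ge0.
by rewrite /is_coeffs Ec -sumrN; apply: eq_bigr => i _; rewrite intrN scaleNr.
Qed.

Lemma is_coeffsD x y c d : is_coeffs b J x c -> is_coeffs b J y d ->
  is_coeffs b J (x + y) (fun i => c i + d i).
Proof.
move=> -> ->; rewrite /is_coeffs -big_split; apply: eq_bigr => i _.
by rewrite intrD scalerDl.
Qed.

Lemma pos_combD x y : pos_comb x -> pos_comb y -> pos_comb (x + y).
Proof.
move=> [c [Ec c_ge0]] [d [Ed d_ge0]]; exists (fun i => c i + d i).
by split=> [|i iJ]; [apply: is_coeffsD | rewrite addr_ge0 ?c_ge0 ?d_ge0].
Qed.

Lemma pos_comb_add_eq0 x y : pos_comb x -> pos_comb y -> x + y = 0 -> x = 0.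
Proof.
move=> [c [Ec c_ge0]] [d [Ed d_ge0]] xy0.
have E0 : is_coeffs b J (x + y) (fun=> 0).
  by rewrite xy0 /is_coeffs big1 // => i _; rewrite scale0r.
rewrite Ec big1 // => i iJ; have := coeffs_unique (is_coeffsD Ec Ed) E0 iJ.
have := c_ge0 i iJ; have := d_ge0 i iJ; rewrite /= => ? ? cd0.
have -> : c i = 0 by lia.
by rewrite scale0r.
Qed.

Lemma qpos_add_neq0 x y : qpos D b J x -> qpos D b J y -> x + y != 0.
Proof.
move=> [[x0 _] Px] [_ Py]; apply: contra_neq x0.
exact: pos_comb_add_eq0 Px Py.
Qed.

Lemma qpos_add_not_neg x y : qpos D b J x -> qpos D b J y -> ~ qpos D b J (- (x + y)).
Proof.
move=> [_ Px] [_ Py] [[xy0 _] Pxy]; move: xy0.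
by rewrite (pos_comb_add_eq0 Pxy (pos_combD Px Py)) ?eqxx // addNr.
Qed.

Lemma supp_rootD x y i : pos_comb x -> pos_comb y ->
  supp_root b J (x + y) i <-> supp_root b J x i \/ supp_root b J y i.
Proof.
move=> [c [Ec c_ge0]] [d [Ed d_ge0]]; have Ecd := is_coeffsD Ec Ed.
split=> [[iJ [e [Ee ei]]]|[[iJ [e [Ee ei]]]|[iJ [e [Ee ei]]]]].
- rewrite (coeffs_unique Ee Ecd iJ) /= in ei.
  have [ci0|ci0] := eqVneq (c i) 0; last by left; split=> //; exists c.
  by right; split=> //; exists d; split=> //; move: ei; rewrite ci0 add0r.
- split=> //; exists (fun i => c i + d i); split=> //=.
  rewrite (coeffs_unique Ee Ec iJ) in ei; have := d_ge0 i iJ; have := c_ge0 i iJ.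
  by move: ei; lia.
- split=> //; exists (fun i => c i + d i); split=> //=.
  rewrite (coeffs_unique Ee Ed iJ) in ei; have := d_ge0 i iJ; have := c_ge0 i iJ.
  by move: ei; lia.
Qed.

Lemma qroot_add x y :
  qroot D b J x -> qroot D b J y -> dotv x y < 0 -> qroot0 (x + y).
Proof.
move=> Rx Ry xy_lt0; rewrite -[y]opprK; apply: qroot_sub (qroot_opp Ry) _ => //.
by rewrite dotvNr oppr_gt0.
Qed.

Lemma qroot_add_distribute x y w :
  qroot D b J x -> qroot D b J y -> qroot D b J (x + y) -> qroot D b J w ->
  qroot D b J (x + y + w) -> qroot0 (x + w) \/ qroot0 (y + w).
Proof.
move=> Rx Ry Rxy Rw Rt.
have [ty_gt0|ty_le0] := ltP 0 (dotv (x + y + w) y).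
  by left; have := qroot_sub Rt Ry ty_gt0; rewrite addrAC addrK.
have [tx_gt0|tx_le0] := ltP 0 (dotv (x + y + w) x).
  by right; have := qroot_sub Rt Rx tx_gt0; rewrite [x + y]addrC addrAC addrK.
have [xw_lt0|xw_ge0] := ltP (dotv x w) 0; first by left; apply: qroot_add.
have [yw_lt0|yw_ge0] := ltP (dotv y w) 0; first by right; apply: qroot_add.
have : 0 < dotv (x + y) (x + y) by rewrite dotv_gt0; case: Rxy.
move: ty_le0 tx_le0 xw_ge0 yw_ge0; rewrite !(dotvDl, dotvDr).
have := dotvC x y; have := dotvC x w; have := dotvC y w; lra.
Qed.

Lemma qroot_add_exchange x y w :
  qroot D b J x -> qroot D b J y -> qroot D b J w -> qroot D b J (x + y) ->
  qroot D b J (x + w) -> qroot0 (x + y + w) \/ qroot0 (y - w).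
Proof.
move=> Rx Ry Rw Rxy Rxw.
have [gt0|le0] := ltP 0 (dotv (x + y) (x + w)).
  by right; have := qroot_sub Rxy Rxw gt0; rewrite opprD addrACA subrr add0r.
have [xyw_lt0|xyw_ge0] := ltP (dotv (x + y) w) 0; first by left; apply: qroot_add.
have [xwy_lt0|xwy_ge0] := ltP (dotv (x + w) y) 0.
  by left; rewrite addrAC; apply: qroot_add.
have [yw_gt0|yw_le0] := ltP 0 (dotv y w); first by right; apply: qroot_sub.
have : 0 < dotv x x by rewrite dotv_gt0; case: Rx.
move: le0 xyw_ge0 xwy_ge0 yw_le0; rewrite !(dotvDl, dotvDr).
have := dotvC x y; have := dotvC x w; have := dotvC y w; lra.
Qed.

End QuotientRootSystem.

Section ComponentGraph.
Variables (V : zmodType) (Rp Phi : V -> Prop).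
Implicit Types (x y w : V) (A C : V -> Prop).

Definition signed_compl w := compl_in Rp Phi w \/ compl_in Rp Phi (- w).

Lemma signed_complN w : signed_compl w -> signed_compl (- w).
Proof. by rewrite /signed_compl opprK => -[]; [right|left]. Qed.

Lemma gadj_addr x w :
  Phi x -> Phi (x + w) -> signed_compl w -> gadj Rp Phi x (x + w).
Proof.
move=> Px Pxw [cw|cw]; do 2!split=> //; first by right; rewrite addrC addKr.
by left; rewrite opprD addNKr.
Qed.

Lemma gadj_signed_compl x y : gadj Rp Phi x y -> signed_compl (y - x).
Proof. by case=> _ [_ [cxy|cyx]]; [right; rewrite opprB | left]. Qed.

Lemma gadj_sym x y : gadj Rp Phi x y -> gadj Rp Phi y x.
Proof. by case=> Px [Py [c|c]]; do 2!split=> //; [right|left]. Qed.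

Lemma gconn_sym x y : gconn Rp Phi x y -> gconn Rp Phi y x.
Proof.
elim=> [u v /gadj_sym|u|u v w _ IHuv _ IHvw]; first exact: rt_step.
  exact: rt_refl.
exact: rt_trans IHvw IHuv.
Qed.

Lemma gconn_Phi x y : Phi x -> gconn Rp Phi x y -> Phi y.
Proof.
move=> Px xy; elim: xy Px => [u v [_ [Pv _]]|u|u v w _ IHuv _ IHvw] // Pu.
exact: IHvw (IHuv Pu).
Qed.

Lemma component_Phi A x : is_component Rp Phi A -> A x -> Phi x.
Proof. by case=> a [Pa EA] /EA ax; apply: gconn_Phi Pa ax. Qed.

Lemma component_gadj A x y : is_component Rp Phi A -> A x -> gadj Rp Phi x y -> A y.
Proof. by case=> a [_ EA] /EA ax xy; apply/EA; apply: rt_trans ax (rt_step _ _ _ _ xy). Qed.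

Lemma component_gconn A x y : is_component Rp Phi A -> A x -> A y -> gconn Rp Phi x y.
Proof. by case=> a [_ EA] /EA ax /EA ay; apply: rt_trans ay; apply: gconn_sym. Qed.

Lemma component_eq A C x :
  is_component Rp Phi A -> is_component Rp Phi C -> A x -> C x -> same_set C A.
Proof.
move=> cA cC Ax Cx y; have [a [_ EA]] := cA; have [c [_ EC]] := cC.
split=> [Cy|Ay]; [apply/EA | apply/EC]; apply: rt_trans (_ : gconn Rp Phi x y).
- exact/EA.
- exact: component_gconn Cy.
- exact/EC.
- exact: component_gconn Ay.
Qed.

Lemma component_ind A (P : V -> Prop) x0 :
  is_component Rp Phi A -> A x0 -> P x0 ->
  (forall y w, A y -> A (y + w) -> signed_compl w -> P y -> P (y + w)) ->
  forall x, A x -> P x.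
Proof.
move=> cA Ax0 P0 step x Ax; suff : A x /\ P x by case.
elim: (clos_rt_rtn1 _ _ _ _ (component_gconn cA Ax0 Ax)) => [|y z yz _ [Ay Py]] //.
have Az := component_gadj cA Ay yz.
have Ez : z = y + (z - y) by rewrite addrC subrK.
by split=> //; rewrite Ez; apply: step; rewrite -?Ez //; apply: gadj_signed_compl.
Qed.

End ComponentGraph.

Section InversionSetComponents.
Variables (R : realType) (n m : nat) (D : seq 'rV[R]_n) (b : 'I_m -> 'rV[R]_n).
Variables (J : {set 'I_m}) (Phi : 'rV[R]_n -> Prop).
Hypotheses (HD : is_root_system D) (HB : is_base D b).
Hypothesis HPhi : inversion_set (qroot D b J) (qpos D b J) Phi.
Implicit Types (x y w : 'rV[R]_n) (A B C X Y : 'rV[R]_n -> Prop).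

Local Notation compl := (compl_in (qpos D b J) Phi).
Local Notation signed := (signed_compl (qpos D b J) Phi).
Local Notation component := (is_component (qpos D b J) Phi).

Lemma Phi_qpos x : Phi x -> qpos D b J x.
Proof. by case: HPhi => + _; apply. Qed.

Lemma Phi_qroot x : Phi x -> qroot D b J x.
Proof. by case/Phi_qpos. Qed.

Lemma Phi_add x y : Phi x -> Phi y -> qroot D b J (x + y) -> Phi (x + y).
Proof. by case: HPhi => _ [+ _]; apply. Qed.

Lemma signed_qroot w : signed w -> qroot D b J w.
Proof. by case=> [[[]]|[[/(qroot_opp HD)]]] //; rewrite opprK. Qed.

Lemma compl_subr g x : Phi x -> compl g -> qpos D b J (g - x) -> compl (g - x).
Proof.
move=> Px [Pg nPg] Pgx; split=> // Phgx; apply: nPg.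
by have := Phi_add Phgx Px; rewrite subrK; apply; case: Pg.
Qed.

Lemma component_sum_step X Y x y w :
  component X -> component Y -> X x -> Y y -> signed w ->
  Phi (x + y + w) -> qroot0 D b J (x + w) ->
  (exists x' y', [/\ X x', Y y' & x + y + w = x' + y']) \/ Y (x + y + w).
Proof.
move=> cX cY Xx Yy sw Pz [Rxw|xw0]; last by right; rewrite addrAC xw0 add0r.
have Px := component_Phi cX Xx; have Py := component_Phi cY Yy.
have Ez : x + y + w = y + (x + w) by rewrite addrAC addrC.
have [Pxw|Nxw] := qroot_pos_or_neg HD HB Rxw.
  have [Phxw|nPhxw] := classic (Phi (x + w)).
    left; exists (x + w), y; split; rewrite 1?addrAC //.
    exact: component_gadj cX Xx (gadj_addr _ _ _).
  by right; rewrite Ez; apply: component_gadj cY Yy (gadj_addr _ _ _); rewrite -?Ez //; left.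
case: sw => [[Pw _]|cNw]; first by case: (qpos_add_not_neg HB (Phi_qpos Px) Pw Nxw).
right; rewrite Ez; apply: component_gadj cY Yy (gadj_addr _ _ _); rewrite -?Ez //; right.
by rewrite opprD addrC in Nxw *; apply: compl_subr.
Qed.

Lemma component_sub_sumset A B C a0 b0 :
  component A -> component B -> component C -> A a0 -> B b0 -> C (a0 + b0) ->
  ~ same_set C A -> ~ same_set C B ->
  forall c, C c -> exists a b', [/\ A a, B b' & c = a + b'].
Proof.
move=> cA cB cC Aa0 Bb0 Cab0 nCA nCB.
apply: (component_ind cC Cab0); first by exists a0, b0.
move=> y w Cy Cz sw [a [b' [Aa Bb Ey]]]; subst y.
have Pz := component_Phi cC Cz.
have Ra := Phi_qroot (component_Phi cA Aa); have Rb := Phi_qroot (component_Phi cB Bb).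
have [Raw|Rbw] := qroot_add_distribute HD HB Ra Rb
  (Phi_qroot (component_Phi cC Cy)) (signed_qroot sw) (Phi_qroot Pz).
  have [//|Bz] := component_sum_step cA cB Aa Bb sw Pz Raw.
  by case: nCB; apply: component_eq cB cC Bz Cz.
rewrite (addrC a) in Pz Cz *.
have [[b'' [a' [Bb' Aa' ->]]]|Az] := component_sum_step cB cA Bb Aa sw Pz Rbw.
  by exists a', b''; rewrite addrC.
by case: nCA; apply: component_eq cA cC Az Cz.
Qed.

Lemma component_partner_step A C a y w :
  component A -> component C -> A a -> Phi y -> Phi (y + w) -> signed w ->
  C (a + y) -> (exists2 a', A a' & C (a' + (y + w))) \/ C (y + w).
Proof.
move=> cA cC Aa Py Pyw sw Cay.
have Pa := component_Phi cA Aa; have Pay := component_Phi cC Cay.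
have Cshift v : signed v -> Phi (a + y + v) -> C (a + y + v).
  by move=> sv Pv; apply: component_gadj cC Cay (gadj_addr _ _ sv).
have Eyw : y + w = a + y + (w - a) by rewrite [RHS]addrC subrKA addrC.
have Ray : qroot D b J (y + a) by rewrite addrC; apply: Phi_qroot.
have [[Rayw|ayw0]|[Raw|aw0]] := qroot_add_exchange HD HB (Phi_qroot Py) (Phi_qroot Pa)
  (signed_qroot sw) Ray (Phi_qroot Pyw).
- left; exists a => //; rewrite addrA; apply: Cshift => //.
  by rewrite -addrA; apply: Phi_add; rewrite // addrA (addrC a).
- by case/eqP: (qpos_add_neq0 HB (Phi_qpos Pa) (Phi_qpos Pyw)); rewrite addrA (addrC a).
- have [Paw|Naw] := qroot_pos_or_neg HD HB Raw.
    have [Phaw|nPhaw] := classic (Phi (a - w)).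
      left; exists (a - w); last by rewrite (addrC y) subrKA.
      exact: component_gadj cA Aa (gadj_addr _ _ (signed_complN sw)).
    by right; rewrite Eyw; apply: Cshift; rewrite -?Eyw //; right; rewrite opprB.
  rewrite opprB in Naw; case: sw => [cw|[Pnw _]].
    by right; rewrite Eyw; apply: Cshift; rewrite -?Eyw //; left; apply: compl_subr.
  by case: (qpos_add_not_neg HB (Phi_qpos Pa) Pnw); rewrite opprD opprK addrC.
- move/eqP: aw0; rewrite subr_eq0 => /eqP aw; rewrite -aw in sw.
  case: sw => [[_ //]|[Pna _]].
  by case/eqP: (qpos_add_neq0 HB (Phi_qpos Pa) Pna); rewrite subrr.
Qed.

Lemma component_partner A B C a0 b0 :
  component A -> component B -> component C -> A a0 -> B b0 -> C (a0 + b0) ->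
  forall y, B y -> (exists2 a, A a & C (a + y)) \/ C y.
Proof.
move=> cA cB cC Aa0 Bb0 Cab0.
apply: (component_ind cB Bb0); first by left; exists a0.
move=> y w By Byw sw [[a Aa Cay]|Cy].
  have [Py Pyw] := (component_Phi cB By, component_Phi cB Byw).
  exact: component_partner_step cA cC Aa Py Pyw sw Cay.
right; have Py := component_Phi cC Cy.
exact: component_gadj cC Cy (gadj_addr Py (component_Phi cB Byw) sw).
Qed.

Lemma supp_component_sumr A B C a0 b0 i :
  component A -> component B -> component C -> A a0 -> B b0 -> C (a0 + b0) ->
  supp_set b J B i -> supp_set b J C i.
Proof.
move=> cA cB cC Aa0 Bb0 Cab0 [y [By sy]].
have [[a Aa Cay]|Cy] := component_partner cA cB cC Aa0 Bb0 Cab0 By; last by exists y.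
have [[_ Pa] [_ Py]] := (Phi_qpos (component_Phi cA Aa), Phi_qpos (component_Phi cB By)).
by exists (a + y); split=> //; apply/(supp_rootD HB _ Pa Py); right.
Qed.

Lemma supp_component_sum A B C a0 b0 :
  component A -> component B -> component C -> A a0 -> B b0 -> C (a0 + b0) ->
  forall i, supp_set b J C i <-> supp_set b J A i \/ supp_set b J B i.
Proof.
move=> cA cB cC Aa0 Bb0 Cab0 i; split; last first.
  case; last exact: supp_component_sumr cA cB cC Aa0 Bb0 Cab0.
  by apply: supp_component_sumr cB cA cC Bb0 Aa0 _; rewrite addrC.
move=> [c [Cc sc]].
have [CA|nCA] := classic (same_set C A); first by left; exists c; rewrite -CA.
have [CB|nCB] := classic (same_set C B); first by right; exists c; rewrite -CB.
have [a [b' [Aa Bb Ec]]] := component_sub_sumset cA cB cC Aa0 Bb0 Cab0 nCA nCB Cc.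
have [[_ Pa] [_ Pb]] := (Phi_qpos (component_Phi cA Aa), Phi_qpos (component_Phi cB Bb)).
rewrite Ec in sc; case/(supp_rootD HB _ Pa Pb): sc => s.
  by left; exists a.
by right; exists b'.
Qed.

End InversionSetComponents.

Theorem proposition4p19 (R : realType) (n m : nat) (D : seq 'rV[R]_n)
    (b : 'I_m -> 'rV[R]_n) (J : {set 'I_m}) (Phi A B C : 'rV[R]_n -> Prop) :
  is_root_system D -> is_base D b -> J \proper [set: 'I_m] ->
  inversion_set (qroot D b J) (qpos D b J) Phi ->
  is_component (qpos D b J) Phi A ->
  is_component (qpos D b J) Phi B ->
  is_component (qpos D b J) Phi C ->
  comp_add (qroot D b J) (qpos D b J) Phi A B C ->
  forall i, supp_set b J C i <-> supp_set b J A i \/ supp_set b J B i.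
Proof.
move=> HD HB _ HPhi cA cB cC [_ [[z Zz] Zadd]].
have [a0 [b0 [Aa0 Bb0 Cab0]]] : exists a0 b0, [/\ A a0, B b0 & C (a0 + b0)].
  case: Zadd => [ZC|[_ [_ [_ [z' [[_ [a0 [b0 [Aa0 [Bb0 ->]]]]] Cz']]]]]].
    have [_ [a0 [b0 [Aa0 [Bb0 Ez]]]]] := Zz.
    by exists a0, b0; split=> //; rewrite -Ez; apply: ZC.
  by exists a0, b0.
exact: (supp_component_sum HD HB HPhi cA cB cC Aa0 Bb0 Cab0).
Qed.
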